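(* In each iteration of Algorithm 1, $i_R=b(i^* )$; that is, for the set $S$ immediately before this iteration, none of the indices $j$ with $i^*\le j<b(i^* )$ belongs to $S$, and $b(i^* )\in S$.
   Context: Problem (P): given an integer $n\ge1$, reals $0<q_1\le\cdots\le q_n$, $z_1,\dots,z_n>0$ and $K>0$, maximize $\sum_{i=1}^n x_i$ subject to $0\le x_i\le q_i$, $0\le x_1\le\cdots\le x_n$, $\sum_{i=1}^n z_ix_i\le K$. For $1\le i<j\le n+1$ let $\mathrm{sum}(i,j)=z_i+\cdots+z_{j-1}$ and $\mathrm{avg}(i,j)=\mathrm{sum}(i,j)/(j-i)$. Algorithm 1 (run on an instance of (P)): Initialize $S=\{0,n+1\}$, $y_i=\mathrm{avg}(i,n+1)$ and $x_i=0$ for $i=1,\dots,n$, and $\hat B=K$. While $\hat B>0$ and $S\ne\{0,1,\dots,n+1\}$, perform an iteration: let $i^*$ be the index $i\in\{1,\dots,n\}\setminus S$ minimizing $y_i$, ties broken in favour of the smallest index; let $i_L=\max\{j\in S:j<i^*\}$ and $i_R=\min\{j\in S:j>i^*\}$; set $d=\min\{\hat B/((i_R-i^* )y_{i^*}),\ q_{i^*}-x_{i^*}\}$; set $\hat B\leftarrow\hat B-d(i_R-i^* )y_{i^*}$; set $x_i\leftarrow x_i+d$ for all $i^*\le i<i_R$; set $y_i\leftarrow\mathrm{avg}(i,i^* )$ for all $i_L<i<i^*$; add $i^*$ to $S$. Finally output $x_1,\dots,x_n$. Blocker: for $1\le i\le n$, $b(i)$ is the value of $i^*$ in the last iteration in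 which $y_i$ is updated (i.e. the last iteration with $i_L<i<i^*$); if $y_i$ is never updated, $b(i)=n+1$. *)

From mathcomp Require Import all_boot all_order all_algebra.
Set Implicit Arguments. Unset Strict Implicit. Unset Printing Implicit Defensive.
Import Order.TTheory GRing.Theory Num.Theory.
Local Open Scope ring_scope.

(* State of the algorithm: the set S (as a predicate on nat), the vectors
   y and x (indexed by nat; only indices 1..n are meaningful), and B-hat. *)
Record state (R : Type) := State {
  sS : nat -> bool;
  sy : nat -> R;
  sx : nat -> R;
  sB : R }.

Section Alg.
Variable R : realFieldType.
Variable n : nat.
Variables (q z : nat -> R) (K : R).

Definition zsum (i j : nat) : R := \sum_(i <= k < j) z k.
Definition avg (i j : nat) : R := zsum i j / (j - i)%:R.

Definition cand (st : state R) : seq nat := [seq i <- iota 1 n | ~~ sS st i].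

(* i* : the index of {1..n}\S minimizing y, ties broken by smallest index *)
Definition istar (st : state R) : nat :=
  let c := cand st in
  nth 0%N c (find (fun i => all (fun j => sy st i <= sy st j) c) c).

Definition iL (st : state R) (i : nat) : nat := (\max_(j < i | sS st j) j)%N.

(* i_R = min { j in S | j > i }, searched among i+1, ..., n+1 *)
Definition iR (st : state R) (i : nat) : nat :=
  (i.+1 + find (sS st) (iota i.+1 (n.+1 - i)))%N.

Definition cond (st : state R) : bool :=
  (0 < sB st) && has (fun j => ~~ sS st j) (iota 0 n.+2).

Definition step (st : state R) : state R :=
  let i := istar st in
  let l := iL st i in
  let r := iR st i in
  let yi := sy st i in
  let d := Num.min (sB st / ((r - i)%:R * yi)) (q i - sx st i) in
  State (fun j => sS st j || (j == i))
        (fun j => if (l < j < i)%N then avg j i else sy st j)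
        (fun j => if (i <= j < r)%N then sx st j + d else sx st j)
        (sB st - d * (r - i)%:R * yi).

Definition init : state R :=
  State (fun j => (j == 0%N) || (j == n.+1)) (fun i => avg i n.+1) (fun _ => 0) K.

(* state immediately before iteration k (k = 0, 1, ...) *)
Definition traj (k : nat) : state R := iter k step init.

Definition performed (k : nat) : Prop := forall j, (j <= k)%N -> cond (traj j).

(* iteration k updates y_i, i.e. i_L < i < i* in that iteration *)
Definition updates (k i : nat) : bool :=
  let st := traj k in (iL st (istar st) < i < istar st)%N.

(* b(i) = v : v is the value of i* in the last iteration updating y_i,
   or n+1 if y_i is never updated *)
Definition is_blocker (i v : nat) : Prop :=
  (exists k, [/\ performed k, updates k i, istar (traj k) = v &
              forall k', (k < k')%N -> performed k' -> ~~ updates k' i])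
  \/ ((forall k, performed k -> ~~ updates k i) /\ v = n.+1).

End Alg.

From Pilot Require Import Defs.
From mathcomp Require Import all_boot all_order all_algebra.
From mathcomp Require Import zify.
Import Order.TTheory GRing.Theory Num.Theory.
Local Open Scope ring_scope.

(* Only the evolution of S matters.
   Fix i outside S and let r be its right neighbour in S.  If an iteration
   inserts its chosen index c into (i, r), then no element of S lies in
   [i, c), so i_L < i < c and the iteration updates y_i; conversely an
   iteration that updates y_i inserts c with nothing of S in (i, c).  Hence,
   while i is outside S, r is the chosen index of the last update of y_i so
   far (or n+1 if there was none).  Once i itself is chosen, every later i_L
   is at least i, so y_i is never updated again and r is b(i). *)

Lemma has_argmin (T : eqType) d (U : orderType d) (f : T -> U) (s : seq T) :
  s != [::] -> has (fun x => all (fun y => (f x <= f y)%O) s) s.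
Proof.
elim: s => //= x s IH _; rewrite lexx /=.
have [-> | /IH /hasP [m ms mmin]] := eqVneq s [::]; first by [].
have [fxm | fmx] := leP (f x) (f m).
  by apply/orP; left; apply/allP => y /(allP mmin); apply: le_trans.
by apply/orP; right; apply/hasP; exists m; rewrite //= (ltW fmx).
Qed.

Section Iterations.
Set Implicit Arguments. Unset Strict Implicit.
Variable R : realFieldType.
Variable n : nat.
Variables (q z : nat -> R) (K : R).

Local Notation traj := (traj n q z K).
Local Notation istar := (istar n).
Local Notation iR := (iR n).
Local Notation cand := (cand n).
Local Notation updates := (updates n q z K).
Local Notation S_ t := (sS (traj t)).

Lemma S_succ t j : S_ t.+1 j = S_ t j || (j == istar (traj t)).
Proof. by []. Qed.

Lemma S_monotone t t' j : (t <= t')%N -> S_ t j -> S_ t' j.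
Proof. by move=> /subnK <-; elim: (t' - t)%N => // d IH Sj; rewrite addSn S_succ IH. Qed.

Lemma S_ends t : S_ t 0 /\ S_ t n.+1.
Proof. by elim: t => [|t [S0 Sn]]; rewrite ?S_succ ?S0 ?Sn //= eqxx ?orbT. Qed.

Lemma mem_cand (st : state R) j : (j \in cand st) = (1 <= j <= n)%N && ~~ sS st j.
Proof. by rewrite mem_filter mem_iota add1n ltnS andbC. Qed.

Lemma istar_mem_cand (st : state R) : cand st != [::] -> istar st \in cand st.
Proof. by move=> c0; apply: mem_nth; rewrite -has_find; apply: has_argmin. Qed.

Lemma istar_le (st : state R) : (istar st <= n)%N.
Proof.
have [c0 | /istar_mem_cand] := eqVneq (cand st) [::].
  by rewrite /Defs.istar c0.
by rewrite mem_cand => /andP [/andP [_ ->]].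
Qed.

Lemma cand_nonempty (st : state R) :
  sS st 0 -> sS st n.+1 -> cond n st -> cand st != [::].
Proof.
move=> S0 Sn /andP [_ /hasP [j]]; rewrite mem_iota add0n => jn nSj.
have j0 : j != 0%N by apply: contraNneq nSj => ->.
have jn1 : j != n.+1 by apply: contraNneq nSj => ->.
apply/negP => /eqP c0; suff: j \in cand st by rewrite c0.
by rewrite mem_cand nSj andbT; lia.
Qed.

Lemma iR_spec (st : state R) i : sS st n.+1 -> (i <= n)%N ->
  [/\ (i < iR st i <= n.+1)%N, sS st (iR st i) &
      forall j, (i < j < iR st i)%N -> ~~ sS st j].
Proof.
move=> Sn iln; set s := iota i.+1 (n.+1 - i).
have hs : has (sS st) s by apply/hasP; exists n.+1 => //; rewrite mem_iota; lia.
have hf : (find (sS st) s < n.+1 - i)%N.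
  by rewrite -(size_iota i.+1 (n.+1 - i)) -has_find.
rewrite /Defs.iR -/s; split; first lia.
  by have := nth_find 0%N hs; rewrite nth_iota.
move=> j /andP [ij jR]; have := @before_find _ 0%N (sS st) s (j - i.+1)%N.
by rewrite nth_iota ?subnKC //; [move=> -> // | ]; lia.
Qed.

Lemma iR_eq (st : state R) i r : sS st n.+1 -> (i < r <= n.+1)%N -> sS st r ->
  (forall j, (i < j < r)%N -> ~~ sS st j) -> iR st i = r.
Proof.
move=> Sn /andP [ir rn] Sr gap.
have [/andP [iiR _] SiR gapR] := iR_spec Sn (ltac:(lia) : (i <= n)%N).
have [lt | gt | //] := ltngtP (iR st i) r.
  by have := gap (iR st i); rewrite iiR lt SiR => /(_ isT).
by have := gapR r; rewrite ir gt Sr => /(_ isT).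
Qed.

Lemma iL_ltP (st : state R) x i : (0 < i)%N ->
  (iL st x < i)%N <-> (forall j, (j < x)%N -> sS st j -> (j < i)%N).
Proof.
move=> i0; rewrite -(prednK i0) ltnS; split.
  by move=> /bigmax_leqP le j jx Sj; rewrite ltnS; apply: (le (Ordinal jx)).
by move=> lt; apply/bigmax_leqP => j Sj; rewrite -ltnS; apply: lt.
Qed.

Lemma not_updates_after_chosen t t' : (t <= t')%N -> ~~ updates t' (istar (traj t)).
Proof.
rewrite leq_eqVlt => /orP [/eqP <- | tt']; apply/negP => /andP [iLi ilt].
  by rewrite ltnn in ilt.
have Si : S_ t' (istar (traj t)) by apply: (S_monotone tt'); rewrite S_succ eqxx orbT.
have i0 := leq_ltn_trans (leq0n _) iLi.
by have := (iL_ltP _ _ i0).1 iLi _ ilt Si; rewrite ltnn.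
Qed.

Lemma iR_init i : (0 < i <= n)%N -> iR (traj 0) i = n.+1.
Proof.
move=> /andP [i0 iln]; apply: iR_eq => /=; rewrite ?eqxx ?orbT //; first lia.
by move=> j ij; apply/norP; split; apply/eqP; lia.
Qed.

Lemma iR_after_update t i : updates t i -> iR (traj t.+1) i = istar (traj t).
Proof.
move=> /andP [iLi ilt]; have i0 := leq_ltn_trans (leq0n _) iLi.
apply: iR_eq.
- by rewrite S_succ (S_ends t).2.
- by rewrite ilt leqW ?istar_le.
- by rewrite S_succ eqxx orbT.
move=> j /andP [ij jlt]; rewrite S_succ negb_or ltn_eqF // andbT.
by apply/negP => /((iL_ltP _ _ i0).1 iLi _ jlt); rewrite ltnNge ltnW.
Qed.

Lemma iR_after_no_update t i : (i <= n)%N -> ~~ S_ t.+1 i -> ~~ updates t i ->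
  iR (traj t.+1) i = iR (traj t) i.
Proof.
move=> iln; rewrite S_succ negb_or => /andP [nSi _] nupd.
have [S0 Sn] := S_ends t.
have i0 : (0 < i)%N by case: i {iln nupd} nSi; rewrite ?S0.
have [/andP [iiR iRn] SiR gapR] := iR_spec Sn iln.
apply: iR_eq; rewrite ?S_succ ?Sn ?SiR ?iiR //.
move=> j /andP [ij jR]; rewrite S_succ negb_or gapR ?ij //=.
apply: contra nupd => /eqP jstar; rewrite /Defs.updates /= -jstar ij andbT.
apply/iL_ltP => // j' j'j Sj'.
have [// | ij' | j'i] := ltngtP j' i; last by rewrite -j'i Sj' in nSi.
by have := gapR j'; rewrite ij' Sj' (ltn_trans j'j jR) => /(_ isT).
Qed.

Definition blocker_before (t i v : nat) : Prop :=
  (exists t0, [/\ (t0 < t)%N, updates t0 i, istar (traj t0) = v &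
                forall t', (t0 < t' < t)%N -> ~~ updates t' i])
  \/ ((forall t', (t' < t)%N -> ~~ updates t' i) /\ v = n.+1).

Lemma blocker_before_iR t i : (i <= n)%N -> ~~ S_ t i ->
  blocker_before t i (iR (traj t) i).
Proof.
move=> iln; elim: t => [nS0 | t IH nSt1].
  right; split=> //; apply: iR_init; rewrite iln andbT.
  by case: i {iln} nS0; rewrite ?(S_ends 0).1.
have nSt : ~~ S_ t i by apply: contra nSt1; apply: S_monotone.
have [upd | nupd] := boolP (updates t i).
  left; exists t; split=> //; first by rewrite iR_after_update.
  by move=> t' /andP [tt']; rewrite ltnS leqNgt tt'.
rewrite iR_after_no_update //.
have [[t0 [t0t upd0 v0 later]] | [none vn]] := IH nSt.
  left; exists t0; split=> //; first exact: leqW.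
  move=> t' /andP [t0t']; rewrite ltnS leq_eqVlt => /orP [/eqP -> // | t't].
  by apply: later; rewrite t0t'.
right; split=> // t'; rewrite ltnS leq_eqVlt => /orP [/eqP -> // | ].
exact: none.
Qed.

Lemma is_blocker_of_before k v : performed n q z K k ->
  blocker_before k (istar (traj k)) v -> is_blocker n q z K (istar (traj k)) v.
Proof.
move=> perf [[t0 [t0k upd0 v0 later]] | [none vn]].
  left; exists t0; split=> //.
    by move=> j jt0; apply: perf; apply: leq_trans jt0 (ltnW t0k).
  move=> k' t0k' _; have [k'k | kk'] := ltnP k' k.
    by apply: later; rewrite t0k'.
  exact: not_updates_after_chosen.
right; split=> // k' _; have [k'k | kk'] := ltnP k' k; first exact: none.
exact: not_updates_after_chosen.
Qed.

End Iterations.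

Theorem lemma7 (R : realFieldType) (n : nat) (q z : nat -> R) (K : R)
  (hn : (1 <= n)%N)
  (hq1 : 0 < q 1%N)
  (hqmono : forall i, (1 <= i < n)%N -> q i <= q i.+1)
  (hz : forall i, (1 <= i <= n)%N -> 0 < z i)
  (hK : 0 < K)
  (k : nat) (hk : performed n q z K k) :
  let st := traj n q z K k in
  let i := istar n st in
  is_blocker n q z K i (iR n st i) /\
  (forall j, (i <= j < iR n st i)%N -> ~~ sS st j) /\ sS st (iR n st i).
Proof.
move=> st i.
have [S0 Sn] := S_ends n q z K k.
have : i \in cand n st by apply/istar_mem_cand/cand_nonempty/hk.
rewrite mem_cand => /andP [/andP [_ iln] nSi].
have [_ SiR gapR] := iR_spec Sn iln.
split; [|split] => //.
  by apply: is_blocker_of_before => //; apply: blocker_before_iR.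
move=> j /andP [ij jR]; move: ij; rewrite leq_eqVlt => /orP [/eqP <- // | ij].
by apply: gapR; rewrite ij jR.
Qed.
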